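(* Let $A$ be a real constant and let $g(x)=\dfrac{Ae^{x/2}+e^{-x/2}}{Ae^{x/2}-e^{-x/2}}$ on an open interval where the denominator does not vanish (for $A=1$, $g=\coth(x/2)$; for $A=-1$, $g=\tanh(x/2)$). Then for every integer $i\ge2$, $$\frac i2\,g\,g^{(i-1)}+\sum_{k=0}^{\lfloor (i-1)/2\rfloor}\binom{i}{2k}B_{2k}\,g^{(i-2k)}=0,$$ where $g^{(j)}$ denotes the $j$-th derivative of $g$.
   Context: Bernoulli numbers are defined by $\frac{z}{e^z-1}=\sum_{m\ge0}\frac{B_m}{m!}z^m$ (so $B_0=1$, $B_2=1/6$). *)

From Stdlib Require Import Reals.
From Coquelicot Require Import Coquelicot.
Open Scope R_scope.

Definition g (A x : R) : R :=
  (A * exp (x / 2) + exp (- x / 2)) / (A * exp (x / 2) - exp (- x / 2)).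

Definition is_bernoulli_seq (B : nat -> R) : Prop :=
  exists r : R, 0 < r /\
    forall z : R, 0 < Rabs z < r ->
      is_pseries (fun m => B m / INR (Factorial.fact m)) z (z / (exp z - 1)).

From Stdlib Require Import Reals Lia Lra.
From Coquelicot Require Import Coquelicot.
Open Scope R_scope.

(* Let [c t = t / (e^t - 1) + t / 2 = (t/2) coth (t/2)]: an even function whose Taylor
   coefficients at 0 are [B_j / j!] for [j <> 1]. The addition formula of coth gives, for
   small [t],
     [t/2 * g x * g (x + t) + c t * (g (x + t) - g x) = t/2].
   Differentiate [i >= 2] times in [t] at [t = 0] by the Leibniz rule: the right side
   vanishes, and on the left only the first derivative of [t/2] and the even derivatives
   of [c] survive. *)

Lemma Derive_n_S f n t : Derive_n f (S n) t = Derive_n (Derive f) n t.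
Proof. rewrite <- Nat.add_1_r, <- (Derive_n_comp f n 1). reflexivity. Qed.

Lemma ex_derive_n_S f n y :
  ex_derive f y -> ex_derive_n (Derive f) n y -> ex_derive_n f (S n) y.
Proof.
  destruct n as [|n]; intros Hf Hn; [exact Hf|].
  apply (ex_derive_ext (Derive_n (Derive f) n)); [|exact Hn].
  intros t; symmetry; apply Derive_n_S.
Qed.

Lemma ex_derive_n_Derive f n y : ex_derive_n f (S n) y -> ex_derive_n (Derive f) n y.
Proof.
  destruct n as [|n]; intros H; [exact I|].
  apply (ex_derive_ext (Derive_n f (S n))); [|exact H].
  intros t; apply Derive_n_S.
Qed.

(* No differentiability is needed: the two difference quotients coincide. *)
Lemma Derive_n_minus_const f c n y :
  Derive_n (fun t => f t - c) (S n) y = Derive_n f (S n) y.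
Proof.
  rewrite !Derive_n_S. apply Derive_n_ext. intros t.
  unfold Derive. f_equal. apply Lim_ext. intros h. f_equal. ring.
Qed.

Definition ex_derive_upto_on (U : R -> Prop) (n : nat) (f : R -> R) : Prop :=
  forall k y, (k <= n)%nat -> U y -> ex_derive_n f k y.

Definition smooth_on (U : R -> Prop) (f : R -> R) : Prop :=
  forall n y, U y -> ex_derive_n f n y.

Lemma smooth_on_sub (U V : R -> Prop) f :
  (forall y, V y -> U y) -> smooth_on U f -> smooth_on V f.
Proof. intros HVU Hf n y Hy. apply Hf, HVU, Hy. Qed.

Lemma smooth_on_locally (U : R -> Prop) f n y :
  open U -> smooth_on U f -> U y ->
  locally y (fun z => forall k, (k <= n)%nat -> ex_derive_n f k z).
Proof. intros HU Hf. apply locally_open; [exact HU|]. intros z Hz k _. apply Hf, Hz. Qed.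

Lemma smooth_on_translate (U : R -> Prop) f x :
  smooth_on U f -> smooth_on (fun t => U (t + x)) (fun t => f (t + x)).
Proof. intros Hf n y Hy. apply ex_derive_n_comp_trans, Hf, Hy. Qed.

Lemma smooth_on_const (U : R -> Prop) c : smooth_on U (fun _ => c).
Proof. intros n y _. apply ex_derive_n_const. Qed.

Lemma smooth_on_minus_const (U : R -> Prop) f c :
  open U -> smooth_on U f -> smooth_on U (fun t => f t - c).
Proof.
  intros HU Hf n y Hy. apply ex_derive_n_minus.
  - apply smooth_on_locally with U; assumption.
  - apply filter_forall. intros z k _. apply ex_derive_n_const.
Qed.

Lemma open_translate (U : R -> Prop) x : open U -> open (fun t => U (t + x)).
Proof.
  intros HU. apply (open_comp (fun t => t + x) U); [|exact HU]. intros t _.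
  apply (ex_derive_continuous (K := R_AbsRing) (V := R_NormedModule) (fun t => t + x)).
  auto_derive. exact I.
Qed.

Lemma open_Rabs_lt r : open (fun t => Rabs t < r).
Proof.
  apply (open_ext (fun t => - r < t /\ t < r)).
  - intros t. split; intros H; [apply Rabs_def1; tauto|apply Rabs_def2 in H; tauto].
  - apply open_and; [apply open_gt|apply open_lt].
Qed.

Lemma binomial_sum_pascal (a b : nat -> R) n :
  sum_f_R0 (fun j => Binomial.C n j * a (S j) * b (n - j)%nat) n
  + sum_f_R0 (fun j => Binomial.C n j * a j * b (S (n - j))) n
  = sum_f_R0 (fun j => Binomial.C (S n) j * a j * b (S n - j)%nat) (S n).
Proof.
  destruct n as [|n].
  - simpl. rewrite (C_n_n 1), C_n_0, (C_n_0 1). ring.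
  - rewrite (decomp_sum (fun j => Binomial.C (S (S n)) j * a j * b (S (S n) - j)%nat)),
      (decomp_sum (fun j => Binomial.C (S n) j * a j * b (S (S n - j)))) by lia.
    simpl pred. rewrite !C_n_0, !tech5, (C_n_n (S (S n))), (C_n_n (S n)).
    replace (sum_f_R0 (fun j => Binomial.C (S (S n)) (S j) * a (S j) * b (S (S n) - S j)%nat) n)
      with (sum_f_R0 (fun j => Binomial.C (S n) j * a (S j) * b (S n - j)%nat) n
          + sum_f_R0 (fun j => Binomial.C (S n) (S j) * a (S j) * b (S (S n - S j))) n).
    + rewrite !Nat.sub_diag, !Nat.sub_0_r. ring.
    + rewrite <- plus_sum. apply sum_eq. intros j Hj.
      rewrite <- (pascal (S n) j) by lia.
      replace (S (S n - S j)) with (S (S n) - S j)%nat by lia.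
      replace (S n - j)%nat with (S (S n) - S j)%nat by lia. ring.
Qed.

Lemma ex_derive_upto_on_Derive (U : R -> Prop) n f :
  ex_derive_upto_on U (S n) f -> ex_derive_upto_on U n (Derive f).
Proof. intros Hf k y Hk Hy. apply ex_derive_n_Derive, Hf; [lia|exact Hy]. Qed.

Section Leibniz.

Variable U : R -> Prop.
Hypothesis HU : open U.

Lemma Derive_mult_locally f h y :
  ex_derive_upto_on U 1 f -> ex_derive_upto_on U 1 h -> U y ->
  locally y (fun z => Derive f z * h z + f z * Derive h z = Derive (fun t => f t * h t) z).
Proof.
  intros Hf Hh. apply locally_open; [exact HU|]. intros z Hz. symmetry.
  apply Derive_mult; [apply (Hf 1%nat)|apply (Hh 1%nat)]; auto.
Qed.

Lemma ex_derive_upto_on_mult n : forall f h,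
  ex_derive_upto_on U n f -> ex_derive_upto_on U n h ->
  ex_derive_upto_on U n (fun t => f t * h t).
Proof.
  induction n as [|n IH]; intros f h Hf Hh k y Hk Hy.
  - replace k with 0%nat by lia. exact I.
  - destruct (Nat.le_gt_cases k n) as [Hkn|Hkn].
    + apply IH; auto; intros j z Hj Hz; [apply Hf|apply Hh]; auto; lia.
    + replace k with (S n) by lia.
      assert (Hf1 : ex_derive_upto_on U 1 f) by (intros j z Hj Hz; apply Hf; auto; lia).
      assert (Hh1 : ex_derive_upto_on U 1 h) by (intros j z Hj Hz; apply Hh; auto; lia).
      assert (Hfn : ex_derive_upto_on U n f) by (intros j z Hj Hz; apply Hf; auto; lia).
      assert (Hhn : ex_derive_upto_on U n h) by (intros j z Hj Hz; apply Hh; auto; lia).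
      apply ex_derive_n_S.
      { apply ex_derive_mult; [apply (Hf 1%nat)|apply (Hh 1%nat)]; auto; lia. }
      apply (ex_derive_n_ext_loc _ _ _ _ (Derive_mult_locally f h y Hf1 Hh1 Hy)).
      apply ex_derive_n_plus; apply locally_open with U; auto; intros z Hz j Hj.
      + apply (IH (Derive f) h); auto. apply ex_derive_upto_on_Derive, Hf.
      + apply (IH f (Derive h)); auto. apply ex_derive_upto_on_Derive, Hh.
Qed.

Lemma smooth_on_mult f h :
  smooth_on U f -> smooth_on U h -> smooth_on U (fun t => f t * h t).
Proof.
  intros Hf Hh n y Hy.
  apply (ex_derive_upto_on_mult n f h); auto; intros k z _ Hz; [apply Hf|apply Hh]; exact Hz.
Qed.

Lemma smooth_on_Derive f : smooth_on U f -> smooth_on U (Derive f).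
Proof. intros Hf n y Hy. apply ex_derive_n_Derive, Hf, Hy. Qed.

Lemma Derive_n_mult n : forall f h y, smooth_on U f -> smooth_on U h -> U y ->
  Derive_n (fun t => f t * h t) n y =
  sum_f_R0 (fun j => Binomial.C n j * Derive_n f j y * Derive_n h (n - j) y) n.
Proof.
  induction n as [|n IH]; intros f h y Hf Hh Hy.
  - simpl. rewrite C_n_0. ring.
  - assert (Hf1 : ex_derive_upto_on U 1 f) by (intros j z _ Hz; apply Hf, Hz).
    assert (Hh1 : ex_derive_upto_on U 1 h) by (intros j z _ Hz; apply Hh, Hz).
    pose proof (smooth_on_Derive f Hf) as Hf'.
    pose proof (smooth_on_Derive h Hh) as Hh'.
    rewrite Derive_n_S, <- (Derive_n_ext_loc _ _ _ _ (Derive_mult_locally f h y Hf1 Hh1 Hy)).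
    rewrite Derive_n_plus by (apply smooth_on_locally with U; auto; apply smooth_on_mult; auto).
    rewrite (IH (Derive f) h), (IH f (Derive h)) by auto.
    rewrite <- (binomial_sum_pascal (fun j => Derive_n f j y) (fun j => Derive_n h j y)).
    f_equal; apply sum_eq; intros j _; rewrite ?Derive_n_S; reflexivity.
Qed.

End Leibniz.

Lemma exp_neq_1 t : t <> 0 -> exp t <> 1.
Proof. intros Ht H. apply Ht, exp_inv. rewrite exp_0. exact H. Qed.

(* The hypothesis matters: [Binomial.C 0 1] is [1]. *)
Lemma C_n_1 n : (1 <= n)%nat -> Binomial.C n 1 = INR n.
Proof.
  intros Hn. destruct n as [|n]; [lia|].
  rewrite pascal_step3, C_n_0 by lia. rewrite Nat.sub_0_r. simpl (INR 1). field.
Qed.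

Lemma sum_f_R0_single (F : nat -> R) m n :
  (m <= n)%nat -> (forall j, j <> m -> F j = 0) -> sum_f_R0 F n = F m.
Proof.
  intros Hm HF. induction n as [|n IH].
  - replace m with 0%nat by lia. reflexivity.
  - rewrite tech5. destruct (Nat.eq_dec m (S n)) as [->|Hne].
    + rewrite sum_eq_R0 by (intros j Hj; apply HF; lia). ring.
    + rewrite IH, (HF (S n)) by lia. ring.
Qed.

Lemma sum_f_R0_odd_vanish (F : nat -> R) m :
  (forall k, F (S (2 * k)) = 0) ->
  sum_f_R0 F (S (2 * m)) = sum_f_R0 (fun k => F (2 * k)%nat) m.
Proof.
  intros HF. induction m as [|m IH].
  - simpl. rewrite (HF 0%nat : F 1%nat = 0). ring.
  - replace (S (2 * S m)) with (S (S (S (2 * m)))) by lia.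
    rewrite tech5, tech5, IH.
    replace (S (S (S (2 * m)))) with (S (2 * S m)) by lia.
    replace (S (S (2 * m))) with (2 * S m)%nat by lia.
    rewrite HF, (tech5 _ m). ring.
Qed.

Lemma sum_f_R0_even_terms (F : nat -> R) i :
  (1 <= i)%nat -> (forall k, F (S (2 * k)) = 0) -> F i = 0 ->
  sum_f_R0 F i = sum_f_R0 (fun k => F (2 * k)%nat) ((i - 1) / 2).
Proof.
  intros Hi Hodd Hi0. destruct (Nat.Even_or_Odd i) as [[m Hm]|[m Hm]]; subst i.
  - destruct m as [|m]; [lia|].
    replace (2 * S m)%nat with (S (S (2 * m))) in * by lia.
    rewrite tech5, Hi0, sum_f_R0_odd_vanish by exact Hodd.
    replace (S (S (2 * m)) - 1)%nat with (1 + m * 2)%nat by lia.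
    rewrite Nat.div_add by lia. simpl. ring.
  - replace (2 * m + 1)%nat with (S (2 * m)) in * by lia.
    rewrite sum_f_R0_odd_vanish by exact Hodd.
    replace (S (2 * m) - 1)%nat with (m * 2)%nat by lia. rewrite Nat.div_mul by lia.
    reflexivity.
Qed.

Lemma Derive_n_even_odd (U : R -> Prop) f m :
  open U -> U 0 -> smooth_on U f -> locally 0 (fun t => f (- t) = f t) ->
  Derive_n f (S (2 * m)) 0 = 0.
Proof.
  intros HU HU0 Hf Heven.
  assert (Hopp : Derive_n (fun t => f (- t)) (S (2 * m)) 0 = - Derive_n f (S (2 * m)) 0).
  { rewrite Derive_n_comp_opp, pow_1_odd, Ropp_0.
    - ring.
    - rewrite Ropp_0. apply smooth_on_locally with U; auto. }
  rewrite (Derive_n_ext_loc _ _ _ _ Heven) in Hopp. lra.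
Qed.

Lemma ex_pseries_CV_radius (a : nat -> R) z : ex_pseries a z -> Rbar_le (Rabs z) (CV_radius a).
Proof.
  intros Hz. apply Rbar_not_lt_le. intros Hlt. apply (CV_disk_outside a z Hlt).
  apply ex_series_lim_0, ex_pseries_R, Hz.
Qed.

Lemma Rbar_lt_CV_radius (a : nat -> R) r t :
  (forall z, 0 < Rabs z < r -> ex_pseries a z) -> Rabs t < r -> Rbar_lt (Rabs t) (CV_radius a).
Proof.
  intros Ha Ht. set (z := (Rabs t + r) / 2).
  pose proof (Rabs_pos t) as Ht0.
  assert (Hz : 0 < Rabs z < r) by (rewrite (Rabs_pos_eq z); unfold z; lra).
  apply Rbar_lt_le_trans with z.
  - simpl. unfold z. lra.
  - replace (Finite z) with (Finite (Rabs z)) by (f_equal; apply Rabs_pos_eq; unfold z; lra).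
    apply ex_pseries_CV_radius, Ha, Hz.
Qed.

Lemma ex_derive_n_half k y : ex_derive_n (fun t => t / 2) k y.
Proof.
  apply (ex_derive_n_ext (fun t => / 2 * t ^ 1)); [intros; simpl; field|].
  apply ex_derive_n_scal_l, ex_derive_n_pow.
Qed.

Lemma smooth_on_half (U : R -> Prop) : smooth_on U (fun t => t / 2).
Proof. intros n y _. apply ex_derive_n_half. Qed.

Lemma Derive_n_half k :
  Derive_n (fun t => t / 2) k 0 = match k with 1%nat => / 2 | _ => 0 end.
Proof.
  rewrite (Derive_n_ext _ (fun t => / 2 * t ^ 1)) by (intros; simpl; field).
  rewrite Derive_n_scal_l, Derive_n_pow.
  destruct k as [|[|k]]; simpl; field.
Qed.

Lemma Derive_n_half_mult_shift (U : R -> Prop) f x i :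
  open U -> U x -> smooth_on U f -> (1 <= i)%nat ->
  Derive_n (fun t => t / 2 * f (t + x)) i 0 = INR i / 2 * Derive_n f (i - 1) x.
Proof.
  intros HU Hx Hf Hi.
  rewrite (Derive_n_mult (fun t => U (t + x))).
  - rewrite (sum_f_R0_single _ 1 i Hi).
    + rewrite Derive_n_half, C_n_1, Derive_n_comp_trans, Rplus_0_l by exact Hi. field.
    + intros j Hj. rewrite Derive_n_half. destruct j as [|[|j]]; [ring|lia|ring].
  - apply open_translate, HU.
  - apply smooth_on_half.
  - apply smooth_on_translate, Hf.
  - rewrite Rplus_0_l. exact Hx.
Qed.

Definition bernoulli_coef (B : nat -> R) (m : nat) : R := B m / INR (Factorial.fact m).

(* [tcoth B t = (t/2) coth (t/2)] near [0]; the [t/2] cancels [B 1 = -1/2]. *)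
Definition tcoth (B : nat -> R) (t : R) : R := PSeries (bernoulli_coef B) t + t / 2.

Section Bernoulli.

Variables (B : nat -> R) (r : R).
Hypothesis Hr : 0 < r.
Hypothesis HB : forall z, 0 < Rabs z < r -> is_pseries (bernoulli_coef B) z (z / (exp z - 1)).

Lemma CV_radius_bernoulli t : Rabs t < r -> Rbar_lt (Rabs t) (CV_radius (bernoulli_coef B)).
Proof. apply Rbar_lt_CV_radius. intros z Hz. eexists. apply HB, Hz. Qed.

Lemma smooth_on_bernoulli_PSeries : smooth_on (fun t => Rabs t < r) (PSeries (bernoulli_coef B)).
Proof. intros n y Hy. apply ex_derive_n_PSeries, CV_radius_bernoulli, Hy. Qed.

Lemma smooth_on_tcoth : smooth_on (fun t => Rabs t < r) (tcoth B).
Proof.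
  intros n y Hy. apply ex_derive_n_plus.
  - apply smooth_on_locally with (fun t => Rabs t < r);
      auto using open_Rabs_lt, smooth_on_bernoulli_PSeries.
  - apply smooth_on_locally with (fun _ => True); auto using open_true, smooth_on_half.
Qed.

Lemma tcoth_eq t : 0 < Rabs t < r -> tcoth B t = t / (exp t - 1) + t / 2.
Proof. intros Ht. unfold tcoth. rewrite (is_pseries_unique _ _ _ (HB t Ht)). reflexivity. Qed.

Lemma tcoth_even : locally 0 (fun t => tcoth B (- t) = tcoth B t).
Proof.
  apply locally_open with (fun t => Rabs t < r); [apply open_Rabs_lt| |rewrite Rabs_R0; exact Hr].
  intros t Ht. destruct (Req_dec t 0) as [->|Ht0]; [rewrite Ropp_0; reflexivity|].
  pose proof (Rabs_pos_lt t Ht0) as Habs.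
  rewrite !tcoth_eq, exp_Ropp by (rewrite ?Rabs_Ropp; lra).
  pose proof (exp_pos t) as Hpos. pose proof (exp_neq_1 t Ht0) as Hne1.
  field. repeat split; intros Hz; apply Hne1; lra.
Qed.

Lemma Derive_n_tcoth j : j <> 1%nat -> Derive_n (tcoth B) j 0 = B j.
Proof.
  intros Hj. unfold tcoth. rewrite Derive_n_plus, Derive_n_half, Derive_n_coef.
  - unfold bernoulli_coef. pose proof (INR_fact_neq_0 j).
    destruct j as [|[|j]]; [|lia|]; field; assumption.
  - rewrite <- Rabs_R0. apply CV_radius_bernoulli. rewrite Rabs_R0. exact Hr.
  - apply smooth_on_locally with (fun t => Rabs t < r);
      auto using open_Rabs_lt, smooth_on_bernoulli_PSeries.
    rewrite Rabs_R0. exact Hr.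
  - apply smooth_on_locally with (fun _ => True); auto using open_true, smooth_on_half.
Qed.

Lemma Derive_n_tcoth_odd m : Derive_n (tcoth B) (S (2 * m)) 0 = 0.
Proof.
  apply (Derive_n_even_odd (fun t => Rabs t < r));
    auto using open_Rabs_lt, smooth_on_tcoth, tcoth_even.
  rewrite Rabs_R0. exact Hr.
Qed.

Lemma Derive_n_tcoth_mult_shift (U : R -> Prop) f x i :
  open U -> U x -> smooth_on U f -> (1 <= i)%nat ->
  Derive_n (fun t => tcoth B t * (f (t + x) - f x)) i 0 =
  sum_f_R0 (fun k => Binomial.C i (2 * k) * B (2 * k)%nat * Derive_n f (i - 2 * k) x)
    ((i - 1) / 2).
Proof.
  intros HU Hx Hf Hi.
  rewrite (Derive_n_mult (fun t => U (t + x) /\ Rabs t < r)).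
  - rewrite (sum_f_R0_even_terms _ i Hi); cycle 1.
    { intros k. rewrite Derive_n_tcoth_odd. ring. }
    { rewrite Nat.sub_diag. simpl. rewrite Rplus_0_l. ring. }
    apply sum_eq. intros k Hk.
    assert (H2k : (2 * k <= i - 1)%nat)
      by (pose proof (Nat.Div0.mul_div_le (i - 1) 2); lia).
    rewrite Derive_n_tcoth by lia.
    replace (i - 2 * k)%nat with (S (i - 2 * k - 1)) by lia.
    rewrite Derive_n_minus_const, Derive_n_comp_trans, Rplus_0_l. reflexivity.
  - apply open_and; [apply open_translate, HU|apply open_Rabs_lt].
  - apply smooth_on_sub with (fun t => Rabs t < r); [tauto|apply smooth_on_tcoth].
  - apply smooth_on_sub with (fun t => U (t + x)); [tauto|].
    apply smooth_on_minus_const; auto using open_translate, smooth_on_translate.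
  - rewrite Rplus_0_l, Rabs_R0. split; assumption.
Qed.

Lemma bernoulli_recursion_of_addition_law (U : R -> Prop) f x i :
  open U -> U x -> smooth_on U f -> (2 <= i)%nat ->
  locally 0 (fun t => t / 2 * (f x * f (t + x)) + tcoth B t * (f (t + x) - f x) = t / 2) ->
  INR i / 2 * f x * Derive_n f (i - 1) x
  + sum_f_R0 (fun k => Binomial.C i (2 * k) * B (2 * k)%nat * Derive_n f (i - 2 * k) x)
      ((i - 1) / 2)
  = 0.
Proof.
  intros HU Hx Hf Hi Hlaw.
  set (W := fun t => U (t + x) /\ Rabs t < r).
  assert (HW : open W) by (apply open_and; [apply open_translate, HU|apply open_Rabs_lt]).
  assert (HW0 : W 0) by (split; [rewrite Rplus_0_l; exact Hx|rewrite Rabs_R0; exact Hr]).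
  assert (HfW : smooth_on W (fun t => f (t + x)))
    by (apply smooth_on_sub with (fun t => U (t + x));
        [unfold W; tauto|apply smooth_on_translate, Hf]).
  assert (HdW : smooth_on W (fun t => f (t + x) - f x))
    by (apply smooth_on_minus_const; assumption).
  assert (HtW : smooth_on W (tcoth B))
    by (apply smooth_on_sub with (fun t => Rabs t < r); [unfold W; tauto|apply smooth_on_tcoth]).
  assert (Hfx : smooth_on U (fun y => f x * f y))
    by (apply smooth_on_mult; auto using smooth_on_const).
  pose proof (Derive_n_half i) as Hzero.
  destruct i as [|[|i']]; [lia|lia|].
  rewrite <- (Derive_n_ext_loc _ _ _ _ Hlaw), Derive_n_plus in Hzero.
  - rewrite (Derive_n_half_mult_shift U (fun y => f x * f y)), Derive_n_scal_l in Hzero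
      by (auto; lia).
    rewrite (Derive_n_tcoth_mult_shift U) in Hzero by (auto; lia).
    rewrite <- Hzero. ring.
  - apply smooth_on_locally with W; auto.
    apply smooth_on_mult; auto using smooth_on_half, smooth_on_mult, smooth_on_const.
  - apply smooth_on_locally with W; auto using smooth_on_mult.
Qed.

End Bernoulli.

Definition g_dom (A y : R) : Prop := A * exp (y / 2) - exp (- y / 2) <> 0.

Lemma open_g_dom A : open (g_dom A).
Proof.
  apply (open_comp (fun y => A * exp (y / 2) - exp (- y / 2)) (fun u => u <> 0)).
  - intros y _.
    apply (ex_derive_continuous (K := R_AbsRing) (V := R_NormedModule)
             (fun y => A * exp (y / 2) - exp (- y / 2))).
    auto_derive. exact I.
  - apply open_neq.
Qed.

Lemma is_derive_g A y : g_dom A y -> is_derive (g A) y (/ 2 - / 2 * (g A y * g A y)).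
Proof.
  unfold g_dom, g. intros H. auto_derive; [exact H|].
  assert (Einv : exp (- y / 2) = / exp (y / 2)) by (rewrite <- exp_Ropp; f_equal; field).
  unfold Rdiv in *. rewrite Einv in *.
  pose proof (exp_pos (y * / 2)) as Hpos. set (e := exp (y * / 2)) in *.
  field. split; [lra|].
  replace (A * e * e - 1) with ((A * e - / e) * e) by (field; lra).
  apply Rmult_integral_contrapositive_currified; lra.
Qed.

(* [g' = (1 - g^2) / 2], so each order of differentiability gives the next. *)
Lemma smooth_on_g A : smooth_on (g_dom A) (g A).
Proof.
  assert (Hupto : forall n, ex_derive_upto_on (g_dom A) n (g A)).
  { induction n as [|n IH]; intros k y Hk Hy.
    - replace k with 0%nat by lia. exact I.
    - destruct (Nat.le_gt_cases k n) as [Hkn|Hkn]; [apply IH; assumption|].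
      replace k with (S n) by lia.
      apply ex_derive_n_S; [eexists; apply is_derive_g, Hy|].
      apply (ex_derive_n_ext_loc (fun z => / 2 - / 2 * (g A z * g A z))).
      { apply locally_open with (g_dom A); [apply open_g_dom| |exact Hy].
        intros z Hz. symmetry. apply is_derive_unique, is_derive_g, Hz. }
      apply ex_derive_n_minus.
      + apply filter_forall. intros z j _. apply ex_derive_n_const.
      + apply locally_open with (g_dom A); [apply open_g_dom| |exact Hy].
        intros z Hz j Hj. apply ex_derive_n_scal_l.
        apply (ex_derive_upto_on_mult _ (open_g_dom A) n); auto. }
  intros n y Hy. apply (Hupto n n y); auto.
Qed.

(* Divided by [t/2], this is the addition formula
   [g x * g (x + t) + coth (t/2) * (g (x + t) - g x) = 1] of [coth]. *)
Lemma g_addition A x t :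
  t <> 0 -> g_dom A x -> g_dom A (t + x) ->
  t / 2 * (g A x * g A (t + x)) + (t / (exp t - 1) + t / 2) * (g A (t + x) - g A x) = t / 2.
Proof.
  unfold g_dom, g. intros Ht H1 H2.
  assert (E1 : exp ((t + x) / 2) = exp (t / 2) * exp (x / 2))
    by (rewrite <- exp_plus; f_equal; field).
  assert (E2 : exp (- (t + x) / 2) = / (exp (t / 2) * exp (x / 2)))
    by (rewrite <- exp_plus, <- exp_Ropp; f_equal; field).
  assert (E3 : exp (- x / 2) = / exp (x / 2)) by (rewrite <- exp_Ropp; f_equal; field).
  assert (E4 : exp t = exp (t / 2) * exp (t / 2)) by (rewrite <- exp_plus; f_equal; field).
  pose proof (exp_neq_1 t Ht) as H3.
  rewrite E1, E2, E3, E4 in *.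
  pose proof (exp_pos (x / 2)) as Ha. pose proof (exp_pos (t / 2)) as Hs.
  set (a := exp (x / 2)) in *. set (s := exp (t / 2)) in *.
  assert (s * s - 1 <> 0) by (intro; apply H3; lra).
  field. repeat split; try lra.
  - replace (A * a * a - 1) with ((A * a - / a) * a) by (field; lra).
    apply Rmult_integral_contrapositive_currified; lra.
  - replace (A * (s * a) * (s * a) - 1) with ((A * (s * a) - / (s * a)) * (s * a)) by (field; lra).
    apply Rmult_integral_contrapositive_currified; [exact H2|nra].
Qed.

Theorem mainTheorem9 (A : R) (B : nat -> R) (HB : is_bernoulli_seq B)
  (i : nat) (Hi : (2 <= i)%nat) (x : R)
  (Hx : A * exp (x / 2) - exp (- x / 2) <> 0) :
  INR i / 2 * g A x * Derive_n (g A) (i - 1)%nat x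
  + sum_f_R0 (fun k => Binomial.C i (2 * k)%nat * B (2 * k)%nat
                        * Derive_n (g A) (i - 2 * k)%nat x) ((i - 1) / 2)%nat
  = 0.
Proof.
  destruct HB as [r [Hr HBr]].
  apply (bernoulli_recursion_of_addition_law B r Hr HBr (g_dom A));
    auto using open_g_dom, smooth_on_g.
  apply locally_open with (fun t => g_dom A (t + x) /\ Rabs t < r).
  - apply open_and; [apply open_translate, open_g_dom|apply open_Rabs_lt].
  - intros t [Htx Htr]. destruct (Req_dec t 0) as [->|Ht0]; [rewrite Rplus_0_l; field|].
    rewrite (tcoth_eq B r HBr) by (split; [apply Rabs_pos_lt|]; assumption).
    apply g_addition; assumption.
  - split; [rewrite Rplus_0_l; exact Hx|rewrite Rabs_R0; exact Hr].
Qed.
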